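(* Consider the non-contextual auction problem described in the context with $T\ge N\ge 3$. For any (possibly randomized) learning algorithm $\mathcal{A}$, there exist a sequence of bids $\{b_t\}_{t=1}^T\subset[0,1]^N$ and CTRs $\{\rho_i\}_{i=1}^N\subset[0,1]$ such that the expected regret of $\mathcal{A}$ is at least $\Omega(\sqrt{NT})$.
   Context: Notation: $\mathrm{smax}_i v_i$ is the second-largest entry of $v$; $\arg\max$, $\arg\mathrm{smax}$ the indices of the largest and second-largest entries, ties broken by a fixed deterministic rule. Non-contextual problem: a fixed set of $N$ ads with unknown constant CTRs $\rho_i\in[0,1]$. At each round $t\in[T]$ the learner chooses estimated CTRs $\tilde\rho_t\in[0,1]^N$ (based on past observations); bids $b_t\in[0,1]^N$ are given. The winner is $i_t=\arg\max_i b_{t,i}\tilde\rho_{t,i}$, the runner-up $j_t=\arg\mathrm{smax}_i b_{t,i}\tilde\rho_{t,i}$, the payment per click $d_t=b_{t,j_t}\tilde\rho_{t,j_t}/\tilde\rho_{t,i_t}$; the winner's ad is clicked with probability $\rho_{i_t}$. The learner observes $b_t$ and the click indicator $c_t\in\{0,1\}$ and receives $c_td_t$. Regret: $\mathrm{Reg}=\sum_{t=1}^T\mathrm{smax}_i b_{t,i}\rho_i-\sum_{t=1}^T c_td_t$. *)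

From HB Require Import structures.
From mathcomp Require Import all_boot all_order all_algebra.
From mathcomp Require Import all_classical all_reals all_analysis.

Set Implicit Arguments.
Unset Strict Implicit.
Unset Printing Implicit Defensive.

Import Order.TTheory GRing.Theory Num.Theory.
Local Open Scope ring_scope.

Section Auction.
Variables (R : realType) (N : nat).

Definition vecR := 'I_N -> R.

(* Index of a largest entry of F among the indices in s; ties are broken
   deterministically in favour of the earliest index of s.
   None iff s is empty. *)
Definition first_argmax (F : vecR) (s : seq 'I_N) : option 'I_N :=
  match s with
  | [::] => None
  | i0 :: s' => Some (foldl (fun j i => if F j < F i then i else j) i0 s')
  end.

Definition amax (F : vecR) : option 'I_N := first_argmax F (enum 'I_N).

Definition asmax (F : vecR) : option 'I_N :=
  match amax F with
  | None => None
  | Some i => first_argmax F [seq j <- enum 'I_N | j != i]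
  end.

(* smax_i F_i : the second-largest entry of F (0 if N < 2, irrelevant here). *)
Definition smax (F : vecR) : R :=
  match asmax F with Some j => F j | None => 0 end.

(* Observation history: for each past round, the bids b_t and the click c_t. *)
Definition history := seq (vecR * bool).

(* A deterministic learner (for a fixed internal random seed): given the past
   observations and the current bids, it outputs estimated CTRs. *)
Definition policy := history -> vecR -> vecR.

(* Expected revenue (over the clicks) of rounds t, t+1, ..., t+k-1, given the
   history h, for bids bs : nat -> vecR (round t uses bs t) and true CTRs rho. *)
Fixpoint exp_revenue (pol : policy) (bs : nat -> vecR) (rho : vecR)
    (k t : nat) (h : history) : R :=
  match k with
  | 0 => 0
  | k'.+1 =>
    let b := bs t in
    let rt := pol h b in
    let score := fun i => b i * rt i in
    match amax score with
    | None => exp_revenue pol bs rho k' t.+1 (rcons h (b, false))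
    | Some i =>
      let d := match asmax score with
               | Some j => b j * rt j / rt i
               | None => 0 end in
      rho i * (d + exp_revenue pol bs rho k' t.+1 (rcons h (b, true)))
      + (1 - rho i) * exp_revenue pol bs rho k' t.+1 (rcons h (b, false))
    end
  end.

Definition exp_regret (T : nat) (pol : policy) (bs : nat -> vecR) (rho : vecR)
    : R :=
  \sum_(t < T) smax (fun i => bs t i * rho i) - exp_revenue pol bs rho T 0 [::].

End Auction.

(* Expected regret of a randomized learner: pol ω is the deterministic policy
   obtained for the internal random seed ω ~ P; expectation over ω and clicks. *)
Definition rand_exp_regret (R : realType) (N T : nat) (d : measure_display)
    (Omega : measurableType d) (P : probability Omega R)
    (pol : Omega -> policy R N) (bs : nat -> vecR R N) (rho : vecR R N)
    : \bar R :=
  (\int[P]_w (exp_regret T (pol w) bs rho)%:E)%E.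

From HB Require Import structures.
From mathcomp Require Import all_boot all_order all_algebra.
From mathcomp Require Import all_classical all_reals all_analysis.
From mathcomp Require Import measurable_realfun.
From mathcomp Require Import ring lra zify.
Import Order.TTheory GRing.Theory Num.Theory.
Local Open Scope ring_scope.

Set Implicit Arguments.
Unset Strict Implicit.
Unset Printing Implicit Defensive.

(* With all bids equal to 1 the estimated CTRs only decide who wins, and the
   winner pays at most 1 per click. Let rho_j be 1/2 + eps on the pair
   G_j = {j, j+1 mod N} and 1/2 elsewhere: the benchmark is 1/2 + eps per
   round, while a round earns more than 1/2 only if its winner lies in G_j,
   so the regret under rho_j is at least eps (T - E_j[#wins in G_j]).
   Comparing the click laws under rho_j and under the uniform 1/2 through
   their Bhattacharyya coefficient, which is at least
   exp(-2 eps^2 E_0[#wins in G_j]), gives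
   E_j[#wins in G_j] <= (1 + 24 eps^2 T) E_0[#wins in G_j] + T/6, and the
   counts E_0[#wins in G_j] sum to at most 2T because every winner lies in
   two pairs. For eps = sqrt(NT)/(24T) the regret averaged over j is at
   least sqrt(NT)/288 for every seed of the learner, hence some rho_j
   achieves it in expectation over the seed. *)

Lemma le_add_of_sqr_le_4mul (R : realFieldType) (z a b : R) :
  0 <= a -> 0 <= b -> z ^+ 2 <= 4 * a * b -> z <= a + b.
Proof.
move=> a0 b0 zz; rewrite leNgt; apply/negP => lt_ab_z.
have ab0 : 0 <= a + b by rewrite addr_ge0.
have : (a + b) * (a + b) < z * z by apply: ltr_pM.
have := sqr_ge0 (a - b); rewrite !expr2 in zz *; nra.
Qed.

(* [b^2 - a^2 = (b - a)(b + a) <= 6 (b - a)^2 + (b + a)^2 / 24]: a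
   square-root-free substitute for Pinsker's inequality. *)
Lemma sqr_diff_mul_le (R : realFieldType) (a b C k : R) :
  0 <= a -> 0 <= b -> 0 <= C <= k ->
  (b ^+ 2 - a ^+ 2) * C <= k * (6 * (a - b) ^+ 2 + (a ^+ 2 + b ^+ 2) / 12).
Proof.
rewrite !expr2 => a0 b0 /andP[C0 Ck].
have diff_le : b * b - a * a <= 6 * ((a - b) * (a - b)) + (a * a + b * b) / 12.
  have : 0 <= (b - a - (a + b) / 12) ^+ 2 by apply: sqr_ge0.
  by rewrite expr2 => ?; nra.
have M0 : 0 <= 6 * ((a - b) * (a - b)) + (a * a + b * b) / 12 by nra.
have [diff0|diff0] := lerP 0 (b * b - a * a).
  apply: le_trans (ler_wpM2l diff0 Ck) _.
  by rewrite mulrC ler_wpM2l // (le_trans C0 Ck).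
by apply: le_trans (mulr_ge0 (le_trans C0 Ck) M0); nra.
Qed.

Section ArgMax.
Variables (R : realType) (N : nat).
Implicit Types (F : vecR R N) (s : seq 'I_N).

Lemma foldl_argmaxP F i0 s :
  let k := foldl (fun j i => if F j < F i then i else j) i0 s in
  k \in i0 :: s /\ {in i0 :: s, forall x, F x <= F k}.
Proof.
elim: s i0 => [|x s IH] i0 /=.
  by split=> [|y]; rewrite ?mem_seq1 // => /eqP ->.
set i1 := if F i0 < F x then x else i0.
have [k_in k_max] := IH i1.
have i1_max y : y \in [:: i0; x] -> F y <= F i1.
  by rewrite /i1 !inE => /orP[]/eqP ->; case: ltP => // /ltW.
have i1_k := k_max _ (mem_head _ _).
split.
  move: k_in; rewrite !inE => /orP[/eqP ->|->]; last by rewrite !orbT.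
  by rewrite /i1; case: ifP; rewrite eqxx ?orbT.
move=> y; rewrite !inE => /or3P[y_i0|y_x|y_s].
- by rewrite (le_trans _ i1_k) // i1_max // inE y_i0.
- by rewrite (le_trans _ i1_k) // i1_max // !inE y_x orbT.
- by rewrite k_max // inE y_s orbT.
Qed.

Lemma first_argmaxP F s k :
  first_argmax F s = Some k -> k \in s /\ {in s, forall x, F x <= F k}.
Proof. by case: s => [//|i0 s] [<-]; apply: foldl_argmaxP. Qed.

Lemma first_argmax_exists F s x : x \in s -> exists k, first_argmax F s = Some k.
Proof. by case: s => [//|i0 s] _; eexists. Qed.

Lemma amax_max F i : amax F = Some i -> forall j, F j <= F i.
Proof. by move=> /first_argmaxP[_ max_i] j; apply: max_i; rewrite mem_enum. Qed.

Lemma smax_attained_twice F v a b :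
  a != b -> F a = v -> F b = v -> (forall i, F i <= v) -> smax F = v.
Proof.
move=> ab Fa Fb Fv.
have [i amaxF] : exists i, amax F = Some i.
  by apply: (@first_argmax_exists _ _ a); rewrite mem_enum.
rewrite /smax /asmax amaxF.
have [c [ci Fc]] : exists c, c != i /\ F c = v.
  by case: (eqVneq a i) => [ai|]; [exists b; rewrite -ai eq_sym | exists a].
have c_in : c \in [seq j <- enum 'I_N | j != i] by rewrite mem_filter ci mem_enum.
have [k sF] := first_argmax_exists F c_in.
have [_ max_k] := first_argmaxP sF.
by rewrite sF; apply/eqP; rewrite eq_le Fv -Fc max_k.
Qed.

End ArgMax.

Section ConstantBids.
Variables (R : realType) (N : nat) (p : policy R N).
Implicit Types (rho : vecR R N) (h : history R N) (G : pred 'I_N).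

Definition bid1 : vecR R N := fun=> 1.
Definition bids1 : nat -> vecR R N := fun=> bid1.
Definition score h : vecR R N := fun i => bid1 i * p h bid1 i.
Definition winner h := amax (score h).
Definition payment h (i : 'I_N) : R :=
  if first_argmax (score h) [seq j <- enum 'I_N | j != i] is Some j then
    bid1 j * p h bid1 j / p h bid1 i
  else 0.
Definition click_prob rho h : R := if winner h is Some i then rho i else 0.
Definition branch_prob rho h (c : bool) : R :=
  if c then click_prob rho h else 1 - click_prob rho h.
Definition wins_in G h : R := if winner h is Some i then (G i)%:R else 0.
Definition extend h (c : bool) : history R N := rcons h (bid1, c).

(* The bids never change, so the history after [h] is determined by the
   clicks [cs] that follow; [path_prob rho h cs] is their probability. *)
Fixpoint path_prob rho h (cs : seq bool) : R :=
  if cs is c :: cs' then branch_prob rho h c * path_prob rho (extend h c) cs'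
  else 1.

Fixpoint path_wins G h (cs : seq bool) : R :=
  if cs is c :: cs' then wins_in G h + path_wins G (extend h c) cs' else 0.

Fixpoint bool_seqs (k : nat) : seq (seq bool) :=
  if k is k'.+1 then
    [seq true :: cs | cs <- bool_seqs k'] ++ [seq false :: cs | cs <- bool_seqs k']
  else [:: [::]].

Definition exp_wins rho G k h : R :=
  \sum_(cs <- bool_seqs k) path_prob rho h cs * path_wins G h cs.

Lemma exp_revenueS rho k t h :
  exp_revenue p bids1 rho k.+1 t h =
  if winner h is Some i then
    rho i * (payment h i + exp_revenue p bids1 rho k t.+1 (extend h true))
    + (1 - rho i) * exp_revenue p bids1 rho k t.+1 (extend h false)
  else exp_revenue p bids1 rho k t.+1 (extend h false).
Proof. by rewrite /= /asmax /winner; case: amax. Qed.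

Lemma big_bool_seqsS k (F : seq bool -> R) :
  \sum_(cs <- bool_seqs k.+1) F cs =
  \sum_(cs <- bool_seqs k) F (true :: cs) + \sum_(cs <- bool_seqs k) F (false :: cs).
Proof. by rewrite big_cat !big_map. Qed.

Lemma size_bool_seqs k cs : cs \in bool_seqs k -> size cs = k.
Proof.
elim: k cs => [|k IH] cs /=; first by rewrite inE => /eqP ->.
by rewrite mem_cat => /orP[] /mapP[cs' /IH <- ->].
Qed.

Lemma sum_path_prob rho k h : \sum_(cs <- bool_seqs k) path_prob rho h cs = 1.
Proof.
elim: k h => [|k IH] h; first by rewrite big_seq1.
by rewrite big_bool_seqsS -!big_distrr /= !IH /branch_prob; ring.
Qed.

Lemma exp_winsS rho G k h :
  exp_wins rho G k.+1 h =
  wins_in G h + branch_prob rho h true * exp_wins rho G k (extend h true)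
              + branch_prob rho h false * exp_wins rho G k (extend h false).
Proof.
have step c : \sum_(cs <- bool_seqs k)
    path_prob rho h (c :: cs) * path_wins G h (c :: cs) =
  wins_in G h * branch_prob rho h c + branch_prob rho h c * exp_wins rho G k (extend h c).
  rewrite /exp_wins big_distrr -[wins_in G h * _]mulr1.
  rewrite -(sum_path_prob rho k (extend h c)) big_distrr -big_split /=.
  by apply: eq_bigr => cs _; ring.
by rewrite /exp_wins big_bool_seqsS !step /exp_wins /branch_prob /=; ring.
Qed.

Definition prob_vec rho := forall i, 0 <= rho i <= 1.

Lemma click_prob01 rho h : prob_vec rho -> 0 <= click_prob rho h <= 1.
Proof. by rewrite /click_prob; case: winner => [i|] // _; rewrite lexx ler01. Qed.

Lemma branch_prob_ge0 rho h c : prob_vec rho -> 0 <= branch_prob rho h c.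
Proof. by move=> /(click_prob01 h)/andP[? ?]; rewrite /branch_prob; case: c; lra. Qed.

Lemma path_prob_ge0 rho h cs : prob_vec rho -> 0 <= path_prob rho h cs.
Proof.
move=> rho01; elim: cs h => [|c cs IH] h /=; first exact: ler01.
by rewrite mulr_ge0 ?branch_prob_ge0.
Qed.

Lemma path_wins_bounds G h cs : 0 <= path_wins G h cs <= (size cs)%:R.
Proof.
elim: cs h => [|c cs IH] h /=; first by rewrite lexx.
have /andP[w0 w1] : 0 <= wins_in G h <= 1.
  by rewrite /wins_in; case: winner => [i|]; [case: (G i) | ]; rewrite /= ?lexx ?ler01.
have /andP[? ?] := IH (extend h c).
by rewrite -natr1; apply/andP; split; lra.
Qed.

Hypothesis p01 : forall h b i, 0 <= p h b i <= 1.

(* When [p h bid1 i = 0] the payment is [x / 0 = 0]. *)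
Lemma payment01 h i : winner h = Some i -> 0 <= payment h i <= 1.
Proof.
move=> /amax_max max_i; rewrite /payment.
case: first_argmax => [j|]; last by rewrite lexx ler01.
have := max_i j; rewrite /score /bid1 !mul1r => pji.
have /andP[pj0 _] := p01 h bid1 j; have /andP[pi0 _] := p01 h bid1 i.
rewrite divr_ge0 //=.
have [->|pi_neq0] := eqVneq (p h bid1 i) 0; first by rewrite invr0 mulr0 ler01.
by rewrite ler_pdivrMr ?mul1r // lt_neqAle eq_sym pi_neq0.
Qed.

Lemma exp_revenue_bounds rho k t h : prob_vec rho ->
  0 <= exp_revenue p bids1 rho k t h <= k%:R.
Proof.
move=> rho01; elim: k t h => [|k IH] t h; first by rewrite /= lexx.
rewrite exp_revenueS -natr1.
have /andP[T0 T1] := IH t.+1 (extend h true).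
have /andP[F0 F1] := IH t.+1 (extend h false).
case win_h: winner => [i|]; last by apply/andP; split; lra.
have /andP[d0 d1] := payment01 win_h; have /andP[r0 r1] := rho01 i.
set RT := exp_revenue _ _ _ _ _ _ in T0 T1 *.
set RF := exp_revenue _ _ _ _ _ _ in F0 F1 *.
have eT : rho i * (payment h i + RT) <= rho i * (1 + k%:R) by rewrite ler_wpM2l //; lra.
have eF : (1 - rho i) * RF <= (1 - rho i) * k%:R by rewrite ler_wpM2l //; lra.
by apply/andP; split; [rewrite addr_ge0 // mulr_ge0 //; lra | lra].
Qed.

Lemma exp_revenue_le rho G (a eps : R) : prob_vec rho -> 0 <= a -> 0 <= eps ->
  (forall i, rho i <= a + eps * (G i)%:R) ->
  forall k t h, exp_revenue p bids1 rho k t h <= k%:R * a + eps * exp_wins rho G k h.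
Proof.
move=> rho01 a0 eps0 rho_le; elim=> [|k IH] t h.
  by rewrite /exp_wins big_seq1 /= !mul0r !mulr0 addr0.
rewrite exp_revenueS exp_winsS /branch_prob /click_prob /wins_in -natr1.
have := IH t.+1 (extend h true); have := IH t.+1 (extend h false).
set RT := exp_revenue _ _ _ _ _ (extend h true).
set RF := exp_revenue _ _ _ _ _ (extend h false).
set ET := exp_wins _ _ _ (extend h true); set EF := exp_wins _ _ _ (extend h false).
case win_h: winner => [i|] RF_le RT_le; last by rewrite mul0r subr0 !mul1r add0r; nra.
have /andP[d0 d1] := payment01 win_h; have /andP[r0 r1] := rho01 i.
have := rho_le i; set g := (G i)%:R => rho_i.
have eT : rho i * (payment h i + RT) <= rho i * (1 + k%:R * a + eps * ET).
  by rewrite ler_wpM2l //; lra.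
have eF : (1 - rho i) * RF <= (1 - rho i) * (k%:R * a + eps * EF).
  by rewrite ler_wpM2l //; lra.
have : rho i * (1 + k%:R * a + eps * ET) + (1 - rho i) * (k%:R * a + eps * EF) =
  rho i + k%:R * a + eps * (rho i * ET + (1 - rho i) * EF) by ring.
lra.
Qed.

End ConstantBids.

Arguments bid1 {R N}.
Arguments bids1 {R N}.

Section Bhattacharyya.
Variables (R : realType) (N : nat) (p : policy R N) (al be : vecR R N).
Hypotheses (al01 : prob_vec al) (be01 : prob_vec be).

Definition bhattacharyya k h : R :=
  \sum_(cs <- bool_seqs k) Num.sqrt (path_prob p al h cs * path_prob p be h cs).

Lemma bhattacharyyaS k h :
  bhattacharyya k.+1 h =
  Num.sqrt (branch_prob p al h true * branch_prob p be h true)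
    * bhattacharyya k (extend h true)
  + Num.sqrt (branch_prob p al h false * branch_prob p be h false)
    * bhattacharyya k (extend h false).
Proof.
have bp c : 0 <= branch_prob p al h c * branch_prob p be h c.
  by rewrite mulr_ge0 // branch_prob_ge0.
rewrite /bhattacharyya big_bool_seqsS !big_distrr /=.
congr (_ + _); apply: eq_bigr => cs _; rewrite mulrACA sqrtrM //.
  exact: (bp true).
exact: (bp false).
Qed.

(* At a node where [al] clicks with probability 1/2, AM-GM splits
   [expR (- kap * exp_wins)] between the two subtrees. *)
Lemma expR_le_bhattacharyya (G : pred 'I_N) (kap : R) :
  (forall i, al i = 1 / 2) -> 0 <= kap ->
  (forall i, expR (- (4 * kap) * (G i)%:R) <= 4 * (be i * (1 - be i))) ->
  forall k h, expR (- kap * exp_wins p al G k h) <= bhattacharyya k h.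
Proof.
move=> al_half kap0 node; elim=> [|k IH] h.
  by rewrite /exp_wins /bhattacharyya !big_seq1 /= !mulr0 expR0 mulr1 sqrtr1.
rewrite exp_winsS bhattacharyyaS.
have x0 := le_trans (expR_ge0 _) (IH (extend h true)).
have y0 := le_trans (expR_ge0 _) (IH (extend h false)).
move: (IH (extend h true)) (IH (extend h false)) x0 y0.
set x := bhattacharyya k _; set y := bhattacharyya k _.
set ET := exp_wins _ _ _ _ _; set EF := exp_wins _ _ _ _ _.
rewrite /branch_prob /click_prob /wins_in.
case win_h: winner => [i|] xT yF x0 y0; last first.
  by rewrite subr0 !mul0r mulr1 sqrtr0 sqrtr1 mul0r !add0r !mul1r.
rewrite al_half; have /andP[b0 b1] := be01 i.
set s := Num.sqrt (1 / 2 * be i); set t := Num.sqrt ((1 - 1 / 2) * (1 - be i)).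
have [s0 t0] : 0 <= s /\ 0 <= t by split; apply: sqrtr_ge0.
have st : expR (- (2 * kap) * (G i)%:R) <= 4 * s * t.
  rewrite -ler_sqr ?nnegrE ?expR_ge0 ?mulr_ge0 //.
  have -> : expR (- (2 * kap) * (G i)%:R) ^+ 2 = expR (- (4 * kap) * (G i)%:R).
    by rewrite expr2 -expRD; congr expR; ring.
  have -> : (4 * s * t) ^+ 2 = 4 * (be i * (1 - be i)).
    have s2 : s ^+ 2 = 1 / 2 * be i by rewrite sqr_sqrtr //; apply: mulr_ge0; lra.
    have t2 : t ^+ 2 = (1 - 1 / 2) * (1 - be i).
      by rewrite sqr_sqrtr //; apply: mulr_ge0; lra.
    by rewrite !exprMn s2 t2; field.
  exact: node.
apply: le_add_of_sqr_le_4mul; rewrite ?mulr_ge0 //.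
have -> : expR (- kap * ((G i)%:R + 1 / 2 * ET + (1 - 1 / 2) * EF)) ^+ 2 =
    expR (- (2 * kap) * (G i)%:R) * (expR (- kap * ET) * expR (- kap * EF)).
  by rewrite expr2 -!expRD; congr expR; field.
rewrite (_ : 4 * (s * x) * (t * y) = 4 * s * t * (x * y)); last by ring.
by rewrite ler_pM ?mulr_ge0 ?expR_ge0 // ler_pM ?expR_ge0.
Qed.

Lemma exp_wins_sub_le G k h :
  exp_wins p be G k h - exp_wins p al G k h <=
  k%:R * (12 * (1 - bhattacharyya k h) + 1 / 6).
Proof.
pose a cs := Num.sqrt (path_prob p al h cs).
pose b cs := Num.sqrt (path_prob p be h cs).
have a2 cs : a cs ^+ 2 = path_prob p al h cs by rewrite sqr_sqrtr // path_prob_ge0.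
have b2 cs : b cs ^+ 2 = path_prob p be h cs by rewrite sqr_sqrtr // path_prob_ge0.
have ab cs : a cs * b cs = Num.sqrt (path_prob p al h cs * path_prob p be h cs).
  by rewrite sqrtrM // path_prob_ge0.
have -> : k%:R * (12 * (1 - bhattacharyya k h) + 1 / 6) =
    \sum_(cs <- bool_seqs k)
      k%:R * (6 * (a cs - b cs) ^+ 2 + (a cs ^+ 2 + b cs ^+ 2) / 12).
  have E cs : k%:R * (6 * (a cs - b cs) ^+ 2 + (a cs ^+ 2 + b cs ^+ 2) / 12) =
      k%:R * (6 + 1 / 12) * path_prob p al h cs
      + k%:R * (6 + 1 / 12) * path_prob p be h cs
      - 12 * k%:R * Num.sqrt (path_prob p al h cs * path_prob p be h cs).
    by rewrite sqrrB a2 b2 -ab; field.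
  rewrite (eq_bigr _ (fun cs _ => E cs)) sumrB big_split /= -!big_distrr /=.
  by rewrite !sum_path_prob /bhattacharyya; field.
rewrite /exp_wins -sumrB big_seq [X in _ <= X]big_seq; apply: ler_sum => cs cs_in.
have /andP[c0 c1] := path_wins_bounds p G h cs.
rewrite (size_bool_seqs cs_in) in c1.
by rewrite -mulrBl -a2 -b2 sqr_diff_mul_le ?sqrtr_ge0 ?c0.
Qed.

End Bhattacharyya.

Lemma expR_neg8_le (R : realType) (x : R) :
  0 <= x <= 1 / 8 -> expR (- (8 * x)) <= 1 - 4 * x.
Proof.
move=> /andP[x0 x8].
have e1 := expR_ge1Dx (8 * x).
have inv : expR (- (8 * x)) * expR (8 * x) = 1 by rewrite -expRD addNr expR0.
have e0 := expR_ge0 (- (8 * x)).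
nra.
Qed.

Section HardInstances.
Variables (R : realType) (N : nat).

Definition pair_at (j : 'I_N) : pred 'I_N := fun i => (i == j) || (i == ordS j).
Definition rho_half : vecR R N := fun=> 1 / 2.
Definition rho_bump (eps : R) (j : 'I_N) : vecR R N :=
  fun i => 1 / 2 + eps * (pair_at j i)%:R.

Lemma sum_pair_at_le (i : 'I_N) : \sum_(j < N) ((pair_at j i)%:R : R) <= 2.
Proof.
apply: le_trans (_ : \sum_(j < N) (((i == j)%:R : R) + (i == ordS j)%:R) <= _).
  by apply: ler_sum => j _; rewrite /pair_at; case: (i == j); case: (i == ordS j);
    rewrite /= ?addr0 ?add0r ?lexx ?ler0n //; lra.
rewrite big_split /=.
have -> : \sum_(j < N) ((i == j)%:R : R) = 1.
  rewrite (bigD1 i) //= eqxx big1 ?addr0 // => j.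
  by rewrite eq_sym => /negbTE ->.
have -> : \sum_(j < N) ((i == ordS j)%:R : R) = 1.
  rewrite (bigD1 (ord_pred i)) //= ord_predK eqxx big1 ?addr0 // => j ji.
  by case: eqP => // i_S; rewrite i_S ordSK eqxx in ji.
lra.
Qed.

Lemma prob_vec_half : prob_vec rho_half.
Proof. by move=> i; rewrite /rho_half; apply/andP; split; lra. Qed.

Lemma prob_vec_bump eps j : 0 <= eps <= 1 / 2 -> prob_vec (rho_bump eps j).
Proof.
move=> /andP[e0 e1] i; rewrite /rho_bump.
by case: (pair_at j i); rewrite ?mulr1 ?mulr0; apply/andP; split; lra.
Qed.

Lemma expR_le_rho_bump eps j i : 0 <= eps -> eps ^+ 2 <= 1 / 8 ->
  expR (- (4 * (2 * eps ^+ 2)) * (pair_at j i)%:R) <=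
  4 * (rho_bump eps j i * (1 - rho_bump eps j i)).
Proof.
move=> e0 e8; rewrite /rho_bump; case: (pair_at j i); last first.
  by rewrite !mulr0 expR0 addr0; lra.
rewrite !mulr1 mulrA (_ : 4 * 2 = 8 :> R); last by ring.
have -> : 4 * ((1 / 2 + eps) * (1 - (1 / 2 + eps))) = 1 - 4 * eps ^+ 2 by field.
by rewrite expR_neg8_le // sqr_ge0 e8.
Qed.

Hypothesis N2 : (2 <= N)%N.

Lemma ordS_neq (j : 'I_N) : j != ordS j.
Proof.
apply/eqP => /(congr1 val) /=.
case: (ltnP j.+1 N) => j_lt; first by rewrite modn_small // => E; lia.
have -> : j.+1 = N by have := ltn_ord j; lia.
by rewrite modnn => j0; move: j_lt; rewrite j0; lia.
Qed.

Lemma exp_regret_bump (p : policy R N) T eps j : 0 <= eps ->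
  exp_regret T p bids1 (rho_bump eps j) =
  T%:R * (1 / 2 + eps) - exp_revenue p bids1 (rho_bump eps j) T 0 [::].
Proof.
move=> e0; rewrite /exp_regret.
rewrite (eq_bigr (fun=> 1 / 2 + eps)) ?sumr_const ?card_ord ?mulr_natl // => t _.
apply: (smax_attained_twice (a := j) (b := ordS j)); first exact: ordS_neq.
- by rewrite /rho_bump /pair_at /bids1 /bid1 eqxx mul1r mulr1.
- by rewrite /rho_bump /pair_at /bids1 /bid1 eqxx orbT mul1r mulr1.
move=> i; rewrite /rho_bump /bids1 /bid1 mul1r.
by case: (pair_at j i); rewrite ?mulr1 ?mulr0; lra.
Qed.

End HardInstances.

Arguments rho_half {R N}.
Arguments prob_vec_half {R N}.

Section DeterministicBound.
Variables (R : realType) (N T : nat).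
Hypotheses (N3 : (3 <= N)%N) (NT : (N <= T)%N).

Definition ctr_gap : R := Num.sqrt (N%:R * T%:R) / (24 * T%:R).

Let T_gt0 : 0 < T%:R :> R.
Proof. rewrite ltr0n; lia. Qed.

Let sqrt_NT_sq : Num.sqrt (N%:R * T%:R) ^+ 2 = N%:R * T%:R :> R.
Proof. by rewrite sqr_sqrtr. Qed.

Lemma ctr_gap_ge0 : 0 <= ctr_gap.
Proof. by rewrite divr_ge0 ?sqrtr_ge0 // mulr_ge0 // ltW. Qed.

Lemma ctr_gap_le : ctr_gap <= 1 / 24.
Proof.
have sqrt_le_T : Num.sqrt (N%:R * T%:R) <= T%:R :> R.
  rewrite -ler_sqr ?nnegrE ?sqrtr_ge0 // sqrt_NT_sq expr2.
  by rewrite ler_wpM2r ?ler_nat.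
rewrite /ctr_gap ler_pdivrMr ?mulr_gt0 //; lra.
Qed.

Lemma prob_vec_gap (j : 'I_N) : prob_vec (rho_bump ctr_gap j).
Proof. by apply: prob_vec_bump; rewrite ctr_gap_ge0 /=; have := ctr_gap_le; lra. Qed.

(* [ctr_gap] balances the gain [eps T] of each instance against the
   information cost [eps^3 T^2] of telling it apart from [rho_half]. *)
Let gap_tradeoff :
  N%:R * (Num.sqrt (N%:R * T%:R) / 288) <=
  ctr_gap * (5 / 6 * N%:R * T%:R - (1 + 24 * ctr_gap ^+ 2 * T%:R) * (2 * T%:R)).
Proof.
set s := Num.sqrt _.
have s0 : 0 <= s := sqrtr_ge0 _.
have -> : ctr_gap * (5 / 6 * N%:R * T%:R
                    - (1 + 24 * ctr_gap ^+ 2 * T%:R) * (2 * T%:R)) =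
    s / 24 * (5 / 6 * N%:R - 2) - s * s ^+ 2 / (288 * T%:R).
  by rewrite /ctr_gap -/s; field; rewrite lt0r_neq0.
rewrite sqrt_NT_sq (_ : s * (N%:R * T%:R) / (288 * T%:R) = s * N%:R / 288).
  have : 3 <= N%:R :> R by rewrite (ler_nat R 3 N).
  by nra.
by field; rewrite lt0r_neq0.
Qed.

Variable p : policy R N.
Hypothesis p01 : forall h b i, 0 <= p h b i <= 1.

Local Notation wins_bump j := (exp_wins p (rho_bump ctr_gap j) (pair_at j) T [::]).
Local Notation wins_half j := (exp_wins p rho_half (pair_at j) T [::]).

Lemma exp_regret_bump_ge (j : 'I_N) :
  ctr_gap * (T%:R - wins_bump j) <= exp_regret T p bids1 (rho_bump ctr_gap j).
Proof.
rewrite (exp_regret_bump _ _ _ _ ctr_gap_ge0); last lia.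
have rho_le i : rho_bump ctr_gap j i <= 1 / 2 + ctr_gap * (pair_at j i)%:R by [].
have half0 : 0 <= 1 / 2 :> R by lra.
have := exp_revenue_le p01 (prob_vec_gap j) half0 ctr_gap_ge0 rho_le T 0 [::].
lra.
Qed.

Lemma wins_bump_le (j : 'I_N) :
  wins_bump j <= wins_half j + T%:R * (24 * ctr_gap ^+ 2 * wins_half j + 1 / 6).
Proof.
have shift := exp_wins_sub_le p prob_vec_half (prob_vec_gap j) (pair_at j) T [::].
have kap0 : 0 <= 2 * ctr_gap ^+ 2 by rewrite mulr_ge0 ?sqr_ge0.
have gap8 : ctr_gap ^+ 2 <= 1 / 8.
  have := ctr_gap_le; have := ctr_gap_ge0; rewrite expr2 => ? ?; nra.
have bhatt := expR_le_bhattacharyya p prob_vec_half (prob_vec_gap j) (fun=> erefl)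
  kap0 (fun i => expR_le_rho_bump j i ctr_gap_ge0 gap8) T [::].
have := expR_ge1Dx (- (2 * ctr_gap ^+ 2) * wins_half j).
set B := bhattacharyya _ _ _ _ _ in shift bhatt *.
move=> exp_ge; have B_ge : 1 - B <= 2 * ctr_gap ^+ 2 * wins_half j by lra.
have : T%:R * (12 * (1 - B) + 1 / 6) <=
       T%:R * (24 * ctr_gap ^+ 2 * wins_half j + 1 / 6).
  by apply: ler_wpM2l; [exact: ltW | lra].
lra.
Qed.

Lemma sum_path_wins_pair_le h cs :
  \sum_(j < N) path_wins p (pair_at j) h cs <= 2 * (size cs)%:R.
Proof.
elim: cs h => [|c cs IH] h /=; first by rewrite big1 ?mulr0.
have : \sum_(j < N) wins_in p (pair_at j) h <= 2.
  rewrite /wins_in; case: winner => [i|]; first exact: sum_pair_at_le.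
  by rewrite big1 //; lra.
by rewrite big_split /= -natr1; have := IH (extend h c); lra.
Qed.

Lemma sum_wins_half_le : \sum_(j < N) wins_half j <= 2 * T%:R.
Proof.
rewrite /exp_wins exchange_big /=.
apply: le_trans (_ : \sum_(cs <- bool_seqs T)
    path_prob p rho_half [::] cs * (2 * T%:R) <= _).
  rewrite big_seq [X in _ <= X]big_seq; apply: ler_sum => cs cs_in.
  rewrite -big_distrr /= ler_wpM2l ?(path_prob_ge0 _ _ _ prob_vec_half) //.
  by rewrite -(size_bool_seqs cs_in) sum_path_wins_pair_le.
by rewrite -big_distrl /= sum_path_prob mul1r.
Qed.

Lemma sum_exp_regret_ge :
  N%:R * (Num.sqrt (N%:R * T%:R) / 288) <=
  \sum_(j < N) exp_regret T p bids1 (rho_bump ctr_gap j).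
Proof.
pose slope := 1 + 24 * ctr_gap ^+ 2 * T%:R.
have e0 := ctr_gap_ge0.
have slope0 : 0 <= slope by rewrite addr_ge0 // !mulr_ge0 ?sqr_ge0 // ltW.
have per_instance j :
    ctr_gap * (5 / 6 * T%:R - slope * wins_half j) <=
    exp_regret T p bids1 (rho_bump ctr_gap j).
  apply: le_trans (exp_regret_bump_ge j); rewrite ler_wpM2l //.
  by have := wins_bump_le j; rewrite /slope; lra.
apply: le_trans gap_tradeoff _; apply: le_trans (ler_sum _ (fun j _ => per_instance j)).
rewrite -big_distrr /= sumrB sumr_const card_ord -big_distrr /= ler_wpM2l //.
rewrite -/slope -[5 / 6 * T%:R *+ N]mulr_natl.
rewrite (_ : N%:R * (5 / 6 * T%:R) = 5 / 6 * N%:R * T%:R); last by ring.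
by rewrite lerD2l lerN2; move: sum_wins_half_le; apply: ler_wpM2l.
Qed.

End DeterministicBound.

Section Averaging.
Variables (d : measure_display) (Omega : measurableType d) (R : realType).
Variable P : probability Omega R.

Lemma integrable_bounded (f : Omega -> R) (M : R) :
  measurable_fun setT f -> (forall w, `|f w| <= M) -> P.-integrable setT (EFin \o f).
Proof.
move=> mf f_le; apply: measurable_bounded_integrable => //.
  by move: (probability_setT P) => /= ->; rewrite ltry.
exists M; split; first exact: num_real.
by move=> M1 M_lt w _; rewrite /= (le_trans (f_le w)) // ltW.
Qed.

Lemma exists_integral_ge n (f : 'I_n -> Omega -> R) (B : R) : (0 < n)%N ->
  (forall j, P.-integrable setT (EFin \o f j)) ->
  (forall w, n%:R * B <= \sum_(j < n) f j w) ->
  exists j, (B%:E <= \int[P]_w (f j w)%:E)%E.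
Proof.
move=> n_gt0 f_int f_sum.
pose r j := fine (\int[P]_w (f j w)%:E)%E.
have rE j : (\int[P]_w (f j w)%:E)%E = (r j)%:E.
  by rewrite fineK // (integrable_fin_num _ (f_int j)).
have sum_r : n%:R * B <= \sum_(j < n) r j.
  rewrite -lee_fin -sumEFin -(eq_bigr _ (fun j _ => rE j)) -integral_sum //.
  have int_cst : (\int[P]_w (cst (n%:R * B)%:E) w = (n%:R * B)%:E)%E.
    by rewrite integral_cst //; move: (probability_setT P) => /= ->; rewrite mule1.
  rewrite -int_cst; apply: le_integral => //; first exact: finite_measure_integrable_cst.
    by apply: integrable_sum => // j _; exact: f_int.
  by move=> w _; rewrite /= sumEFin lee_fin.
case: (pickP (fun j => B <= r j)) => [j Bj|r_lt]; first by exists j; rewrite rE lee_fin.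
have : \sum_(j < n) r j < \sum_(j < n) B.
  apply: ltr_sum; last by move=> j _; rewrite ltNge r_lt.
  by apply/hasP; exists (Ordinal n_gt0); rewrite ?mem_index_enum.
by rewrite sumr_const card_ord -mulr_natl; lra.
Qed.

End Averaging.

Section FiberMeasurable.
Variables (d : measure_display) (Omega : measurableType d) (R : realType).

Definition fiber_measurable (X : eqType) (g : Omega -> X) :=
  forall x, measurable_fun setT (fun w => g w == x).

Lemma fiber_measurable_cst (X : eqType) (x0 : X) : fiber_measurable (fun=> x0).
Proof. by move=> x; apply: measurable_cst. Qed.

Lemma fiber_measurable_if (X : eqType) (c : Omega -> bool) (g1 g2 : Omega -> X) :
  measurable_fun setT c -> fiber_measurable g1 -> fiber_measurable g2 ->
  fiber_measurable (fun w => if c w then g1 w else g2 w).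
Proof.
move=> mc m1 m2 x.
rewrite (_ : (fun w => _ == x) = fun w => if c w then g1 w == x else g2 w == x).
  exact: measurable_fun_ifT.
by apply: funext => w; case: (c w).
Qed.

Lemma fiber_measurable_Some (X : eqType) (g : Omega -> X) :
  fiber_measurable g -> fiber_measurable (fun w => Some (g w)).
Proof. by move=> mg [x|]; [exact: mg | exact: measurable_cst]. Qed.

Lemma measurable_fun_case (X : finType) (g : Omega -> X) (H : X -> Omega -> R) :
  fiber_measurable g -> (forall x, measurable_fun setT (H x)) ->
  measurable_fun setT (fun w => H (g w) w).
Proof.
move=> mg mH.
rewrite (_ : (fun w => _) = fun w => \sum_(x : X) (if g w == x then H x w else 0)).
  by apply: measurable_sum => x; apply: measurable_fun_ifT => //; exact: measurable_cst.
apply: funext => w; rewrite (bigD1 (g w)) //= eqxx big1 ?addr0 // => x.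
by rewrite eq_sym => /negbTE ->.
Qed.

Lemma fiber_measurable_first_argmax N (F : Omega -> vecR R N) s :
  (forall i, measurable_fun setT (fun w => F w i)) ->
  fiber_measurable (fun w => first_argmax (F w) s).
Proof.
move=> mF; case: s => [|i0 s] /=; first exact: fiber_measurable_cst.
apply: fiber_measurable_Some.
suff step g0 : fiber_measurable g0 -> fiber_measurable (fun w =>
    foldl (fun j i => if F w j < F w i then i else j) (g0 w) s).
  exact: step (fiber_measurable_cst i0).
elim: s g0 => [|x s IH] g0 mg0 //=.
have mc : measurable_fun setT (fun w => F w (g0 w) < F w x).
  by apply: measurable_fun_ltr; [exact: (measurable_fun_case (H := fun i w => F w i)) | ].
exact: IH (fiber_measurable_if mc (fiber_measurable_cst x) mg0).
Qed.

End FiberMeasurable.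

Section RandomizedPolicy.
Variables (d : measure_display) (Omega : measurableType d) (R : realType) (N : nat).
Variable pol : Omega -> policy R N.
Hypothesis pol01 : forall w h b i, 0 <= pol w h b i <= 1.
Hypothesis pol_meas : forall h b i, measurable_fun setT (fun w => pol w h b i).

Lemma measurable_score h i : measurable_fun setT (fun w => score (pol w) h i).
Proof. by apply: measurable_funM; [exact: measurable_cst | exact: pol_meas]. Qed.

Lemma fiber_measurable_winner h : fiber_measurable (fun w => winner (pol w) h).
Proof. exact: fiber_measurable_first_argmax (measurable_score h). Qed.

(* [x^-1 = x `^ (-1)] on [0, +oo), and [powR] is measurable. *)
Lemma measurable_payment h i : measurable_fun setT (fun w => payment (pol w) h i).
Proof.
pose pay (o : option 'I_N) w : R :=
  if o is Some j then bid1 j * pol w h bid1 j * pol w h bid1 i `^ (-1) else 0.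
rewrite (_ : (fun w => _) = fun w =>
    pay (first_argmax (score (pol w) h) [seq j <- enum 'I_N | j != i]) w).
  apply: measurable_fun_case.
    exact: fiber_measurable_first_argmax (measurable_score h).
  case=> [j|]; last exact: measurable_cst.
  apply: measurable_funM; first exact: measurable_score.
  exact: measurableT_comp (@measurable_powR R (-1)) (pol_meas h bid1 i).
apply: funext => w; rewrite /payment /pay; case: first_argmax => // j.
by rewrite powR_inv1 //; case/andP: (pol01 w h bid1 i).
Qed.

Lemma measurable_exp_revenue rho k t h :
  measurable_fun setT (fun w => exp_revenue (pol w) bids1 rho k t h).
Proof.
elim: k t h => [|k IH] t h; first exact: measurable_cst.
pose next (o : option 'I_N) w : R :=
  if o is Some i then
    rho i * (payment (pol w) h i + exp_revenue (pol w) bids1 rho k t.+1 (extend h true))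
    + (1 - rho i) * exp_revenue (pol w) bids1 rho k t.+1 (extend h false)
  else exp_revenue (pol w) bids1 rho k t.+1 (extend h false).
rewrite (_ : (fun w => _) = fun w => next (winner (pol w) h) w); last first.
  by apply: funext => w; rewrite exp_revenueS.
apply: measurable_fun_case; first exact: fiber_measurable_winner.
case=> [i|]; last exact: IH.
apply: measurable_funD; apply: measurable_funM; try exact: measurable_cst; last exact: IH.
by apply: measurable_funD; [exact: measurable_payment | exact: IH].
Qed.

Lemma integrable_exp_regret_bump (P : probability Omega R) T eps j :
  (2 <= N)%N -> 0 <= eps <= 1 / 2 ->
  P.-integrable setT (EFin \o fun w => exp_regret T (pol w) bids1 (rho_bump eps j)).
Proof.
move=> N2 eps01; have /andP[eps0 _] := eps01.
have -> : (fun w => exp_regret T (pol w) bids1 (rho_bump eps j)) = fun w =>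
    T%:R * (1 / 2 + eps) - exp_revenue (pol w) bids1 (rho_bump eps j) T 0 [::].
  by apply: funext => w; rewrite exp_regret_bump.
apply: (@integrable_bounded _ _ _ P _ (T%:R * (1 / 2 + eps) + T%:R)).
  by apply: measurable_funB; [exact: measurable_cst | exact: measurable_exp_revenue].
move=> w; have /andP[rev0 revT] :=
  exp_revenue_bounds (pol01 w) T 0 [::] (prob_vec_bump j eps01).
have : 0 <= T%:R * (1 / 2 + eps) by rewrite mulr_ge0 //; lra.
by rewrite ler_norml; lra.
Qed.

End RandomizedPolicy.

Theorem theorem2 (R : realType) :
  exists c : R, 0 < c /\
  forall (N T : nat), (3 <= N)%N -> (N <= T)%N ->
  forall (d : measure_display) (Omega : measurableType d)
         (P : probability Omega R) (pol : Omega -> policy R N),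
    (forall w h b i, 0 <= pol w h b i <= 1) ->
    (forall h b i, measurable_fun setT (fun w => pol w h b i)) ->
    exists (bs : nat -> vecR R N) (rho : vecR R N),
      (forall t i, 0 <= bs t i <= 1) /\
      (forall i, 0 <= rho i <= 1) /\
      ((c * Num.sqrt (N%:R * T%:R))%:E <= rand_exp_regret T P pol bs rho)%E.
Proof.
exists (1 / 288); split => [|N T N3 NT d Omega P pol pol01 pol_meas].
  by rewrite divr_gt0.
have N2 : (2 <= N)%N by lia.
have gap01 : 0 <= ctr_gap R N T <= 1 / 2.
  by rewrite ctr_gap_ge0 //=; have := ctr_gap_le R N3 NT; lra.
have [j regret_j] := exists_integral_ge (P := P) (B := Num.sqrt (N%:R * T%:R) / 288)
  (ltnW N2)
  (fun j => integrable_exp_regret_bump pol01 pol_meas P T j N2 gap01)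
  (fun w => sum_exp_regret_ge N3 NT (pol01 w)).
exists bids1, (rho_bump (ctr_gap R N T) j); split.
  by move=> t i; rewrite /bids1 /bid1 lexx ler01.
split; first exact: prob_vec_gap.
by rewrite mul1r mulrC.
Qed.
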